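(* Let $n\ge0$ and set $\xi_0=1$, $\xi_{n+2}=-1$, and $\xi_k=\cos\frac{(2k-1)\pi}{2n+2}$ for $1\le k\le n+1$. Then $1=\xi_0>\xi_1>\cdots>\xi_{n+1}>\xi_{n+2}=-1$, and for each $1\le k\le n+1$ the polynomial $S_{2n+1}(x)$ has exactly one zero in $(\xi_{k+1},\xi_k)$. These $n+1$ zeros together with $x=1$ are all the zeros of $S_{2n+1}(x)$, and all of them are simple.
   Context: $U_n(x)$ is the Chebyshev polynomial of the second kind ($U_n(\cos\theta)=\sin((n+1)\theta)/\sin\theta$), with $U_{-1}=0$. For $n\ge0$, $S_{2n+1}(x)=2(2nx^2+2x^2+2nx-x-1)U_n(x)-2(2nx+3x+2n+1)U_{n-1}(x)$, a polynomial of degree $n+2$. *)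

From HB Require Import structures.
From mathcomp Require Import all_boot all_order all_algebra.
From mathcomp Require Import all_classical all_reals all_analysis.
Set Implicit Arguments. Unset Strict Implicit. Unset Printing Implicit Defensive.
Import Order.TTheory GRing.Theory Num.Theory.
Local Open Scope ring_scope.

(* Ushift m = U_{m-1}: Ushift 0 = U_{-1} = 0, Ushift 1 = U_0 = 1,
   U_{m+1} = 2 X U_m - U_{m-1}  (the standard Chebyshev recurrence, equivalent
   to U_n(cos t) = sin((n+1)t)/sin t). *)
Fixpoint Ushift (R : nzRingType) (m : nat) : {poly R} :=
  match m with
  | 0%N => 0
  | k.+1 =>
      match k with
      | 0%N => 1
      | j.+1 => 2%:P * 'X * Ushift R k - Ushift R j
      end
  end.

Definition chebU (R : nzRingType) (n : nat) : {poly R} := Ushift R n.+1.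
Definition chebUm1 (R : nzRingType) (n : nat) : {poly R} := Ushift R n.

Definition S_odd (R : nzRingType) (n : nat) : {poly R} :=
  2%:P * ((2 * n%:R)%:P * 'X^2 + 2%:P * 'X^2 + (2 * n%:R)%:P * 'X - 'X - 1)
    * chebU R n
  - 2%:P * ((2 * n%:R)%:P * 'X + 3%:P * 'X + (2 * n%:R + 1)%:P) * chebUm1 R n.

Definition xi (R : realType) (n k : nat) : R :=
  if k == 0%N then 1
  else if (k <= n.+1)%N then cos (((2 * k)%:R - 1) * pi / (2 * n%:R + 2))
  else -1.

From mathcomp Require Import all_boot all_order all_algebra.
From mathcomp Require Import all_classical all_reals all_analysis.
From mathcomp Require Import polyrcf ring lra zify.
Import Order.TTheory GRing.Theory Num.Theory.
Local Open Scope ring_scope.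

Set Implicit Arguments. Unset Strict Implicit. Unset Printing Implicit Defensive.

(* With x = cos t one has U_{m-1}(cos t) sin t = sin (m t).  At the angles
   t_k = (2k-1)pi/(2n+2), where cos ((n+1) t_k) = 0, the two terms of S_{2n+1}
   combine into S_{2n+1}(xi_k) sin t_k = 2 (-1)^k (xi_k + 1)^2, while
   S_{2n+1}(-1) = 4 (-1)^n.  Hence S_{2n+1} alternates in sign along
   xi_1 > ... > xi_{n+2} and vanishes in each (xi_{k+1}, xi_k).  With the zero
   x = 1 these are n + 2 distinct zeros of a nonzero polynomial of degree at
   most n + 2, so there are no others and none of them is multiple. *)

Section MaximalRoots.
Variable R : idomainType.
Implicit Types (p : {poly R}) (rs : seq R).

Lemma mem_maximal_roots p rs x :
  p != 0 -> all (root p) rs -> uniq rs -> (size p <= (size rs).+1)%N ->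
  root p x -> x \in rs.
Proof.
move=> p0 prs urs p_size px; apply: contraTT p_size => xNrs.
by rewrite -ltnNge (max_poly_roots (rs := x :: rs)) //= ?px ?prs ?xNrs.
Qed.

Lemma maximal_roots_simple p rs x :
  p != 0 -> all (root p) rs -> uniq rs -> (size p <= (size rs).+1)%N ->
  ~~ (('X - x%:P) ^+ 2 %| p).
Proof.
move=> p0 prs urs p_size; apply/negP.
move=> /(Pdiv.IdomainMonic.dvdpP (monic_exp 2 (monicXsubC x)))[q pE].
(* q' is one size shorter than p but still vanishes on all of rs, x included. *)
set q' := q * ('X - x%:P).
have {}pE : p = q' * ('X - x%:P) by rewrite pE /q' expr2 mulrA.
have q'0 : q' != 0 by apply: contraNneq p0; rewrite pE => ->; rewrite mul0r.
have q'rs : all (root q') rs.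
  apply/allP => y /(allP prs); rewrite pE rootM root_XsubC => /orP[//|/eqP->].
  by rewrite rootM root_XsubC eqxx orbT.
have p_sizeE : size p = (size q').+1.
  by rewrite pE size_Mmonic ?monicXsubC // size_XsubC addn2.
by have := max_poly_roots q'0 q'rs urs; rewrite ltnNge -ltnS -p_sizeE p_size.
Qed.

End MaximalRoots.

Section AlternatingRoots.
Variables (R : rcfType) (p : {poly R}) (c : nat -> R) (m : nat) (r : R).
Hypothesis c_decr : forall k, (1 <= k <= m)%N -> c k.+1 < c k.

Lemma c_noninc i j : (1 <= i <= j)%N -> (j <= m.+1)%N -> c j <= c i.
Proof.
move=> /andP[i1]; elim: j => [|j IH]; first by rewrite leqn0 => /eqP->.
rewrite leq_eqVlt => /orP[/eqP-> // | ij] jm.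
by apply: le_trans (IH ij (ltnW jm)); apply/ltW/c_decr; rewrite (leq_trans i1 ij).
Qed.

Lemma c_itv_disjoint i j x : (1 <= i <= m)%N -> (1 <= j <= m)%N ->
  c i.+1 < x < c i -> c j.+1 < x < c j -> i = j.
Proof.
wlog ij : i j / (i <= j)%N => [hwlog im jm xi xj|].
  by have [ij|/ltnW ji] := leqP i j; [apply: hwlog | apply/esym/hwlog].
move=> /andP[i1 _] /andP[_ jm] /andP[ci1_x _] /andP[_ x_cj].
apply/eqP; rewrite eqn_leq ij leqNgt; apply/negP => lt_ij.
have : c j <= c i.+1 by apply: c_noninc; rewrite ?lt_ij ?(leqW jm).
by rewrite leNgt (lt_trans ci1_x x_cj).
Qed.

Hypothesis p_alt : forall k, (1 <= k <= m.+1)%N -> 0 < p.[c k] * (-1) ^+ k.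
Hypothesis p_size : (size p <= m.+2)%N.
Hypothesis r_root : root p r.
Hypothesis c1_le_r : c 1 <= r.

Lemma alternating_poly_neq0 : p != 0.
Proof. by apply: contraTneq (p_alt (k := 1) isT) => ->; rewrite horner0 mul0r ltxx. Qed.

Lemma alternating_root_between k : (1 <= k <= m)%N ->
  exists2 x, c k.+1 < x < c k & root p x.
Proof.
move=> k_range; have /andP[k1 km] := k_range.
have sign_change : p.[c k.+1] * p.[c k] < 0.
  have k_range' : (1 <= k <= m.+1)%N by rewrite k1 leqW.
  have := mulr_gt0 (p_alt (k := k.+1) km) (p_alt k_range').
  by rewrite exprS mulN1r mulrN mulNr oppr_gt0 mulrACA -expr2 sqrr_sign mulr1.
have [x] := poly_ivtoo (ltW (c_decr k_range)) sign_change.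
by rewrite in_itv /=; exists x.
Qed.

Theorem alternating_roots :
  [/\ forall k, (1 <= k <= m)%N -> exists x, [/\ c k.+1 < x < c k, root p x &
        forall y, c k.+1 < y < c k -> root p y -> y = x],
      forall x, root p x -> x = r \/ exists2 k, (1 <= k <= m)%N & c k.+1 < x < c k &
      forall x, ~~ (('X - x%:P) ^+ 2 %| p)].
Proof.
have /boolp.choice[f f_root] :
    forall k, exists x, (1 <= k <= m)%N -> c k.+1 < x < c k /\ root p x.
  move=> k; have [/alternating_root_between[x x_itv px]|km] := boolP (1 <= k <= m)%N.
    by exists x.
  by exists r => km'; case/negP: km.
have lt_r k x : (1 <= k <= m)%N -> x < c k -> x < r.
  move=> /andP[k1 km] x_ck; apply: lt_le_trans x_ck (le_trans _ c1_le_r).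
  by apply: c_noninc; rewrite ?k1 ?(leqW km).
pose rs := r :: [seq f k | k <- iota 1 m].
have rs_mem x : x \in rs -> x = r \/ exists2 k, (1 <= k <= m)%N & x = f k.
  rewrite inE => /orP[/eqP->|/mapP[k]]; first by left.
  by rewrite mem_iota add1n ltnS; right; exists k.
have rs_uniq : uniq rs.
  rewrite /= map_inj_in_uniq ?iota_uniq ?andbT.
    apply/mapP => -[k]; rewrite mem_iota add1n ltnS => km r_fk.
    by have /andP[_ /(lt_r k _ km)] := (f_root k km).1; rewrite -r_fk ltxx.
  move=> i j; rewrite !mem_iota !add1n !ltnS => im jm fij.
  by apply: (c_itv_disjoint im jm (f_root i im).1); rewrite fij; apply: (f_root j jm).1.
have rs_roots : all (root p) rs.
  by apply/allP => x /rs_mem[->//|[k km ->]]; apply: (f_root k km).2.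
have rs_size : (size p <= (size rs).+1)%N by rewrite /= size_map size_iota.
have p0 := alternating_poly_neq0.
have root_rs x : root p x -> x = r \/ exists2 k, (1 <= k <= m)%N & x = f k.
  by move=> px; apply/rs_mem/(mem_maximal_roots p0 rs_roots rs_uniq rs_size px).
split.
- move=> k km; have [fk_itv fk_root] := f_root k km.
  exists (f k); split => // y y_itv /root_rs[y_r | [i im y_fi]].
    by move: y_itv => /andP[_ /(lt_r k _ km)]; rewrite y_r ltxx.
  by rewrite y_fi (c_itv_disjoint im km (f_root i im).1) // -y_fi.
- move=> x /root_rs[-> | [k km ->]]; first by left.
  by right; exists k => //; apply: (f_root k km).1.
- by move=> x; apply: maximal_roots_simple p0 rs_roots rs_uniq rs_size.
Qed.

End AlternatingRoots.

Lemma nat_ind2 (P : nat -> Prop) : P 0%N -> P 1%N ->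
  (forall m, P m -> P m.+1 -> P m.+2) -> forall m, P m.
Proof.
move=> P0 P1 PSS m; suff : P m /\ P m.+1 by case.
by elim: m => [|m [Pm PSm]]; split => //; apply: PSS.
Qed.

Section PolySize.
Variable R : nzRingType.
Implicit Types p q : {poly R}.

Lemma size_polyD_le p q k : (size p <= k)%N -> (size q <= k)%N -> (size (p + q)%R <= k)%N.
Proof. by move=> pk qk; apply: leq_trans (size_polyD _ _) _; rewrite geq_max pk. Qed.

Lemma size_polyB_le p q k : (size p <= k)%N -> (size q <= k)%N -> (size (p - q)%R <= k)%N.
Proof. by move=> pk qk; apply: size_polyD_le; rewrite ?size_polyN. Qed.

Lemma size_polyM_le p q i j : (size p <= i.+1)%N -> (size q <= j.+1)%N ->
  (size (p * q)%R <= (i + j).+1)%N.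
Proof. by move=> pi qj; have := size_polyMleq p q; lia. Qed.

Lemma size_polyCM_le (c : R) p k : (size p <= k)%N -> (size (c%:P * p)%R <= k)%N.
Proof. by move=> pk; rewrite mul_polyC; apply: leq_trans (size_scale_leq _ _) pk. Qed.

End PolySize.

Section ChebyshevRing.
Variable R : comNzRingType.

Lemma UshiftSS m : Ushift R m.+2 = 2%:P * 'X * Ushift R m.+1 - Ushift R m.
Proof. by []. Qed.

Lemma Ushift_at1 m : (Ushift R m).[1] = m%:R.
Proof.
elim/nat_ind2: m => [||m IHm IHSm]; rewrite ?horner0 ?hornerC //.
by rewrite UshiftSS !hornerE IHm IHSm -!natr1; ring.
Qed.

Lemma Ushift_atN1 m : (Ushift R m).[-1] = (-1) ^+ m.+1 * m%:R.
Proof.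
elim/nat_ind2: m => [||m IHm IHSm]; first by rewrite horner0 mulr0.
  by rewrite hornerC expr2 mulN1r opprK mulr1.
by rewrite UshiftSS !hornerE IHm IHSm -!natr1 !exprS; ring.
Qed.

Lemma size_Ushift m : (size (Ushift R m) <= m)%N.
Proof.
elim/nat_ind2: m => [||m IHm IHSm]; first by rewrite size_poly0.
  by rewrite size_poly1.
rewrite UshiftSS; apply: size_polyB_le; last by apply: leq_trans IHm (leqW (leqnSn m)).
by rewrite -mulrA; apply/size_polyCM_le/(size_polyM_le (i := 1) (j := m)); rewrite ?size_polyX.
Qed.

Variable n : nat.

Lemma horner_S_odd x : (S_odd R n).[x] =
  2 * (2 * n%:R * x ^+ 2 + 2 * x ^+ 2 + 2 * n%:R * x - x - 1) * (Ushift R n.+1).[x]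
  - 2 * (2 * n%:R * x + 3 * x + (2 * n%:R + 1)) * (Ushift R n).[x].
Proof. by rewrite /S_odd /chebU /chebUm1 !hornerE. Qed.

Lemma size_S_odd : (size (S_odd R n) <= n.+3)%N.
Proof.
rewrite /S_odd /chebU /chebUm1 -!mulrA.
apply: size_polyB_le; apply: size_polyCM_le.
  apply: (size_polyM_le (i := 2) (j := n)) (size_Ushift _).
  by do ![apply: size_polyB_le | apply: size_polyD_le | apply: size_polyCM_le
         | rewrite size_polyX | rewrite size_polyXn | rewrite size_poly1].
apply: leq_trans (size_polyM_le (i := 1) (j := n) _ (leqW (size_Ushift _))) _ => //.
by do ![apply: size_polyD_le | apply: size_polyCM_le | rewrite size_polyX
       | apply: leq_trans (size_polyC_leq1 _) _].
Qed.

Lemma root_S_odd1 : root (S_odd R n) 1.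
Proof. by rewrite /root horner_S_odd !Ushift_at1 -!natr1; apply/eqP; ring. Qed.

Lemma S_odd_N1 : (S_odd R n).[-1] = 4 * (-1) ^+ n.
Proof. by rewrite horner_S_odd !Ushift_atN1 -!natr1 !exprS; ring. Qed.

End ChebyshevRing.

Section ChebyshevTrig.
Variable R : realType.

Lemma Ushift_cos m t : (Ushift R m).[cos t] * sin t = sin (m%:R * t).
Proof.
elim/nat_ind2: m => [||m IHm IHSm]; first by rewrite horner0 !mul0r sin0.
  by rewrite hornerC !mul1r.
rewrite UshiftSS !hornerE mulrBl -(mulrA _ _ (sin t)) IHm IHSm.
have -> : m%:R * t = m.+1%:R * t - t by rewrite -natr1 mulrDl mul1r addrK.
have -> : m.+2%:R * t = m.+1%:R * t + t by rewrite -(natr1 m.+1) mulrDl mul1r.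
by rewrite sinB sinD; ring.
Qed.

Lemma S_odd_cos n t : cos (n.+1%:R * t) = 0 ->
  (S_odd R n).[cos t] * sin t = - 2 * sin (n.+1%:R * t) * (cos t + 1) ^+ 2.
Proof.
move=> cos_nt.
have sin_nt : sin (n%:R * t) = sin (n.+1%:R * t) * cos t.
  have -> : n%:R * t = n.+1%:R * t - t by rewrite -natr1 mulrDl mul1r addrK.
  by rewrite sinB cos_nt mul0r subr0.
rewrite horner_S_odd mulrBl -!(mulrA _ _ (sin t)) !Ushift_cos sin_nt; ring.
Qed.

Lemma cos_lt_cos (x y : R) : 0 <= x -> x < y -> y <= pi -> cos y < cos x.
Proof.
move=> x_ge0 lt_xy y_lepi.
by rewrite ltr_cos // in_itv /= ?x_ge0 ?y_lepi ?(ltW lt_xy) ?(le_trans x_ge0 (ltW lt_xy))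
  ?(le_trans (ltW lt_xy) y_lepi).
Qed.

End ChebyshevTrig.

Section Xi.
Variables (R : realType) (n : nat).

Definition xi_angle k : R := ((2 * k)%:R - 1) * pi / (2 * n%:R + 2).

Lemma xi_cos k : (1 <= k <= n.+1)%N -> xi R n k = cos (xi_angle k).
Proof. by case: k => // k /andP[_ kn]; rewrite /xi /= kn. Qed.

Lemma xi_last : xi R n n.+2 = -1.
Proof. by rewrite /xi /= ltnn. Qed.

Let den_gt0 : 0 < 2 * n%:R + 2 :> R.
Proof. by rewrite ltr_wpDl ?mulr_ge0. Qed.

Lemma xi_angle_gt0 k : (1 <= k)%N -> 0 < xi_angle k.
Proof.
move=> k1; rewrite /xi_angle divr_gt0 // mulr_gt0 ?pi_gt0 // subr_gt0 natrM.
have : 1 <= k%:R :> R by rewrite ler1n.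
lra.
Qed.

Lemma xi_angle_ltpi k : (k <= n.+1)%N -> xi_angle k < pi.
Proof.
move=> kn; rewrite /xi_angle ltr_pdivrMr // natrM.
have : k%:R <= n%:R + 1 :> R by rewrite natr1 ler_nat.
have := pi_gt0 R; nra.
Qed.

Lemma xi_angle_lt k : xi_angle k < xi_angle k.+1.
Proof.
have -> : xi_angle k.+1 = xi_angle k + 2 * pi / (2 * n%:R + 2).
  by rewrite /xi_angle !natrM -natr1; ring.
by rewrite ltrDl divr_gt0 // mulr_gt0 ?pi_gt0.
Qed.

Lemma xi_angle_mulS j : n.+1%:R * xi_angle j.+1 = pi / 2 + pi *+ j.
Proof. by rewrite /xi_angle natrM -!natr1 -mulr_natr; field; rewrite lt0r_neq0. Qed.

Lemma xi_decreasing k : (k <= n.+1)%N -> xi R n k.+1 < xi R n k.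
Proof.
case: k => [|k] kn.
  by rewrite [xi R n 0]/xi /= -cos0 xi_cos // cos_lt_cos ?xi_angle_gt0 // ltW ?xi_angle_ltpi.
have [lt_kn | ge_kn] := ltnP k n.
  rewrite !xi_cos ?lt_kn ?(ltnW lt_kn) //.
  by rewrite cos_lt_cos ?xi_angle_lt // ltW ?xi_angle_gt0 ?xi_angle_ltpi.
have -> : k = n by apply/eqP; rewrite eqn_leq ge_kn -ltnS kn.
by rewrite xi_last -cospi xi_cos ?leqnn // cos_lt_cos ?xi_angle_ltpi // ltW ?xi_angle_gt0.
Qed.

Lemma S_odd_xi_sign k : (1 <= k <= n.+2)%N -> 0 < (S_odd R n).[xi R n k] * (-1) ^+ k.
Proof.
move=> /andP[k1 kn]; have [kn1 | ltn_k] := leqP k n.+1.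
  case: k k1 kn kn1 => // j _ _ jn; rewrite xi_cos //; set t := xi_angle j.+1.
  have cos_nt : cos (n.+1%:R * t) = 0.
    by rewrite xi_angle_mulS (alternatingn (@cosDpi R)) cos_pihalf mulr0.
  have sin_nt : sin (n.+1%:R * t) = (-1) ^+ j.
    by rewrite xi_angle_mulS (alternatingn (@sinDpi R)) sin_pihalf mulr1.
  have sin_t : 0 < sin t by apply: sin_gt0_pi; rewrite xi_angle_gt0 // xi_angle_ltpi.
  have cos_t : -1 < cos t.
    by rewrite -cospi cos_lt_cos ?xi_angle_ltpi // ltW ?xi_angle_gt0.
  rewrite -(pmulr_lgt0 _ sin_t) mulrAC S_odd_cos // sin_nt.
  have -> : -2 * (-1) ^+ j * (cos t + 1) ^+ 2 * (-1) ^+ j.+1 =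
      2 * (cos t + 1) ^+ 2 * ((-1) ^+ j) ^+ 2 by rewrite [(-1) ^+ j.+1]exprS; ring.
  by rewrite sqrr_sign mulr1 mulr_gt0 // exprn_gt0 // -(opprK 1) subr_gt0.
have -> : k = n.+2 by apply/eqP; rewrite eqn_leq kn.
rewrite xi_last S_odd_N1.
have -> : 4 * (-1) ^+ n * (-1) ^+ n.+2 = 4 * ((-1) ^+ n) ^+ 2 :> R by rewrite !exprS; ring.
by rewrite sqrr_sign mulr1.
Qed.

End Xi.

Theorem mainTheorem15 (R : realType) (n : nat) :
  [/\ xi R n 0 = 1, xi R n n.+2 = -1 &
      (forall k : nat, (k <= n.+1)%N -> xi R n k.+1 < xi R n k)] /\
      (forall k : nat, (1 <= k <= n.+1)%N ->
         exists x : R, [/\ (xi R n k.+1 < x < xi R n k), root (S_odd R n) x &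
           forall y : R, (xi R n k.+1 < y < xi R n k) -> root (S_odd R n) y -> y = x]) /\
  [/\ S_odd R n != 0, root (S_odd R n) 1,
      (forall x : R, root (S_odd R n) x ->
         x = 1 \/ exists2 k : nat, (1 <= k <= n.+1)%N & (xi R n k.+1 < x < xi R n k)) &
      (forall x : R, root (S_odd R n) x -> ~~ (('X - x%:P) ^+ 2 %| S_odd R n))].
Proof.
have xi_decr k (k_range : (1 <= k <= n.+1)%N) := xi_decreasing R (andP k_range).2.
have xi1_le1 : xi R n 1 <= 1 := ltW (xi_decreasing R (leq0n n.+1)).
have S_alt := @S_odd_xi_sign R n.
have [in_each_itv all_roots simple] :=
  alternating_roots xi_decr S_alt (size_S_odd R n) (root_S_odd1 R n) xi1_le1.
split; first by split; [| exact: xi_last | exact: xi_decreasing].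
split; first exact: in_each_itv.
by split; [exact: alternating_poly_neq0 S_alt | exact: root_S_odd1 | | move=> x _].
Qed.
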